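(* Let $n\ge 1$ be an integer and let $C$ be a real constant with $C>\frac{(n-4)^2}{16}$. Then $$\sum_{j=0}^n\sqrt{C+j}\;>\;(n+1)\sqrt{C+\tfrac{n}{2}-1}.$$ *)

From Stdlib Require Import Reals.

(* Pair the term j with the term n - j.  Writing x = C + j and y = C + n - j, one has
   x + y = 2C + n, so each pair must beat 2 sqrt((x + y)/2 - 1).  Squaring twice turns
   sqrt x + sqrt y > 2 sqrt((x + y)/2 - 1) into (x - y)^2 < 8(x + y) - 16, i.e.
   (n - 2j)^2 < 16 C + 8 n - 16, which follows from 16 C > (n - 4)^2 and
   (n - 2j)^2 <= n^2. *)

From Stdlib Require Import Reals Lra Lia Psatz.
Open Scope R_scope.

Lemma sqrt_add_gt_sqrt_midpoint (x y : R) :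
  0 <= x -> 0 <= y -> (x - y) ^ 2 < 8 * (x + y) - 16 ->
  sqrt x + sqrt y > 2 * sqrt ((x + y) / 2 - 1).
Proof.
  intros hx hy hxy.
  assert (hm : 0 <= (x + y) / 2 - 1) by (pose proof (pow2_ge_0 (x - y)); lra).
  pose proof (sqrt_sqrt x hx) as ex; pose proof (sqrt_sqrt y hy) as ey.
  pose proof (sqrt_sqrt _ hm) as em.
  pose proof (sqrt_pos x); pose proof (sqrt_pos y); pose proof (sqrt_pos ((x + y) / 2 - 1)).
  set (u := sqrt x) in *; set (v := sqrt y) in *; set (w := sqrt ((x + y) / 2 - 1)) in *.
  assert (huv : x + y - 4 < 2 * (u * v)).
  { destruct (Rlt_le_dec (x + y - 4) 0) as [hneg | hnneg]; [nra |].
    assert (hsq : (2 * (u * v)) ^ 2 > (x + y - 4) ^ 2).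
    { replace ((2 * (u * v)) ^ 2) with (4 * (x * y)) by (rewrite <- ex, <- ey; ring).
      nra. }
    assert (huv0 : 0 <= u * v) by (apply Rmult_le_pos; assumption).
    nra. }
  (* (u + v)^2 = x + y + 2uv > 2(x + y) - 4 = (2w)^2 *)
  nra.
Qed.

Lemma sum_f_R0_reflect (f : nat -> R) (n : nat) :
  sum_f_R0 (fun j => f (n - j)%nat) n = sum_f_R0 f n.
Proof.
  revert f; induction n as [| n IH]; intro f; [reflexivity |].
  rewrite decomp_sum by lia; simpl pred.
  rewrite (sum_eq _ (fun i => f (n - i)%nat)) by (intros; reflexivity).
  rewrite IH, Nat.sub_0_r; simpl; ring.
Qed.

Lemma sum_f_R0_gt_of_reflected_pairs (f : nat -> R) (c : R) (n : nat) :
  (forall j, (j <= n)%nat -> f j + f (n - j)%nat > 2 * c) ->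
  sum_f_R0 f n > INR (S n) * c.
Proof.
  intro hpair.
  assert (hpos : 0 < sum_f_R0 (fun j => f j + f (n - j)%nat - 2 * c) n).
  { apply tech1; intros j hj; specialize (hpair j hj); lra. }
  rewrite minus_sum, plus_sum, sum_f_R0_reflect, sum_cte in hpos.
  lra.
Qed.

Theorem lemma2 (n : nat) (C : R) (hn : (1 <= n)%nat)
  (hC : C > (INR n - 4) ^ 2 / 16) :
  sum_f_R0 (fun j => sqrt (C + INR j)) n
    > INR (n + 1) * sqrt (C + INR n / 2 - 1).
Proof.
  rewrite Nat.add_1_r.
  apply sum_f_R0_gt_of_reflected_pairs; intros j hj.
  rewrite minus_INR by exact hj.
  pose proof (le_INR _ _ hj); pose proof (pos_INR j).
  assert (hC0 : 0 <= C) by (pose proof (pow2_ge_0 (INR n - 4)); lra).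
  replace (C + INR n / 2 - 1)
    with ((C + INR j + (C + (INR n - INR j))) / 2 - 1) by field.
  apply sqrt_add_gt_sqrt_midpoint; nra.
Qed.
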